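(* Let $3\le n\le k$ be integers, let $X$ be the discrete-time Markov chain on $\mathbb{N}^{n-1}$ described in the context and $Y$ the chain embedded in $X$ at its visits to $S$. For $b\in\mathbb{R}$ let $V(\mathbf{x})=\sum_{i=1}^{n-1}x_i^2+b\sum_{1\le i<l\le n-1}x_ix_l$ and, for $\mathbf{x}\in S$, $\Delta_V(\mathbf{x})=\mathbb{E}[V(\mathbf{Y}_{t+1})-V(\mathbf{x})\mid \mathbf{Y}_t=\mathbf{x}]$. Then for $\mathbf{x}\in S\setminus S^\star$, $$k\,\Delta_V(\mathbf{x})=-(k-n)(2+b(n-2))\sum_{i=1}^{n-1}x_i+(n-1)\Big(k-n+2+b\frac{(k-n+1)(n-2)}{2}\Big),$$ and for $j=1,\dots,n-2$ and $\mathbf{x}_j'=(1,\dots,1,x_{j+1},\dots,x_{n-1})$ (first $j$ entries equal to $1$, $x_i\ge2$ for $i=j+1,\dots,n-1$), $$k\,\Delta_V(\mathbf{x}_j')=\Big[(k-n+1)(2+b(k-1))\sum_{i=2}^{j+1}\frac{1}{k-n+i}-(k-n)(2+b(n-2))\Big]\sum_{i=j+1}^{n-1}x_i+\delta_j,$$ where each $\delta_j$ is a real number independent of $x_{j+1},\dots,x_{n-1}$ and $\max_{1\le j\le n-2}|\delta_j|<\infty$.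
   Context: $\mathbb{N}=\{0,1,2,\dots\}$. $\mathbf{0}$, $\mathbf{1}$ are the all-zero and all-one vectors of dimension $n-1$, $\mathbf{e}_l$ the $l$-th unit vector. For $j=0,\dots,n-1$, $R_j$ is the set of $\mathbf{x}\in\mathbb{N}^{n-1}$ with exactly $j$ zero entries. $X=\{\mathbf{X}_t\}_{t\ge1}$ is the Markov chain on $\mathbb{N}^{n-1}$ with nonzero transition probabilities: from $\mathbf{x}\in R_0$, to $\mathbf{x}-\mathbf{1}$ w.p. $\frac{k-(n-1)}{k}$ and to $\mathbf{x}+\mathbf{e}_l$ w.p. $\frac1k$ ($l=1,\dots,n-1$); from $\mathbf{x}\in R_j$, $1\le j\le n-2$, to $\mathbf{x}+\mathbf{e}_l$ w.p. $\frac{k-(n-1-j)}{kj}$ if $x_l=0$ and w.p. $\frac1k$ if $x_l\ge1$; from $\mathbf{0}$ to $\mathbf{e}_l$ w.p. $\frac1{n-1}$. $S=\{\mathbf{x}:x_i\ge1\ \forall i\}$ and $S^\star=\{\mathbf{x}\in S:\mathbf{x}-\mathbf{1}\notin S\}$ (elements of $S$ with some entry equal to $1$). The embedded chain is $\mathbf{Y}_t=\mathbf{X}_{\sigma_t}$, where $\sigma_t=\min\{m\ge1:\sum_{i=1}^m\mathds{1}_{\{\mathbf{X}_i\in S\}}=t\}$; it is a Markov chain on $S$. *)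

From HB Require Import structures.
From mathcomp Require Import all_boot all_order all_algebra.
From mathcomp Require Import all_classical all_reals all_analysis.
Set Implicit Arguments. Unset Strict Implicit. Unset Printing Implicit Defensive.
Import Order.TTheory GRing.Theory Num.Theory.
Import numFieldNormedType.Exports.
Local Open Scope ring_scope.

(* States: vectors of N^(n-1), coordinates indexed by 'I_(n.-1)
   (paper coordinate i, 1<=i<=n-1, is index i-1 here). *)
Definition vec (n : nat) := {ffun 'I_n.-1 -> nat}.

Definition nzeros n (x : vec n) : nat := #|[set i | x i == 0%N]|.
Definition vsub1 n (x : vec n) : vec n := [ffun i => (x i - 1)%N].
Definition vaddE n (x : vec n) (l : 'I_n.-1) : vec n :=
  [ffun i => (x i + (i == l))%N].
Definition vzero n : vec n := [ffun => 0%N].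

Definition inS n (x : vec n) : bool := [forall i, (0 < x i)%N].
Definition inSstar n (x : vec n) : bool := inS x && ~~ inS (vsub1 x).

Definition pX (R : realType) (n k : nat) (x y : vec n) : R :=
  let j := nzeros x in
  if j == 0%N then
    (if y == vsub1 x then (k%:R - (n%:R - 1)) / k%:R
     else if [exists l, y == vaddE x l] then 1 / k%:R else 0)
  else if x == vzero n then
    (if [exists l, y == vaddE x l] then 1 / (n%:R - 1) else 0)
  else
    match [pick l | y == vaddE x l] with
    | Some l => if x l == 0%N then (k%:R - (n%:R - 1 - j%:R)) / (k%:R * j%:R)
                else 1 / k%:R
    | None => 0
    end.

(* Every transition of X with positive probability is a "move":
   None = x -> x - 1, Some l = x -> x + e_l. *)
Definition move n := option 'I_n.-1.
Definition step n (x : vec n) (mv : move n) : vec n :=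
  match mv with None => vsub1 x | Some l => vaddE x l end.

(* Weight of a move sequence s started from x (with origin x0):
   probability of the path times (f(end) - f(x0)) if the path returns to S
   for the first time exactly at its last step, and 0 otherwise. *)
Fixpoint path_weight (R : realType) (n k : nat) (f : vec n -> R)
    (x0 x : vec n) (s : seq (move n)) : R :=
  match s with
  | [::] => 0
  | mv :: s' =>
      let y := step x mv in
      @pX R n k x y *
        (if inS y then (if s' is [::] then f y - f x0 else 0)
         else @path_weight R n k f x0 y s')
  end.

Definition hit_term (R : realType) (n k : nat) (f : vec n -> R) (x : vec n)
    (m : nat) : R :=
  \sum_(s : (m.+1).-tuple (move n)) @path_weight R n k f x x s.

(* Delta_f(x) = E[f(Y_{t+1}) - f(x) | Y_t = x], Y the chain embedded at
   the visits of X to S: sum over the time of first return to S. *)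
Definition DeltaE (R : realType) (n k : nat) (f : vec n -> R) (x : vec n) : R :=
  limn (series (@hit_term R n k f x)).

Definition DeltaE_cvg (R : realType) (n k : nat) (f : vec n -> R) (x : vec n)
  : Prop := cvgn (series (@hit_term R n k f x)).

Definition Vfun (R : realType) (n : nat) (b : R) (x : vec n) : R :=
  \sum_(i < n.-1) (x i)%:R ^+ 2
  + b * \sum_(i < n.-1) \sum_(l < n.-1 | (i < l)%N) (x i)%:R * (x l)%:R.

From HB Require Import structures.
From mathcomp Require Import all_boot all_order all_algebra.
From mathcomp Require Import all_classical all_reals all_analysis.
From mathcomp Require Import ring lra zify.
Import Order.TTheory GRing.Theory Num.Theory.
Import numFieldNormedType.Exports.
Local Open Scope ring_scope.
Set Implicit Arguments. Unset Strict Implicit. Unset Printing Implicit Defensive.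

(** Off [S] the chain only climbs, one coordinate at a time, and from a state
   with [j] zero coordinates it fills one of them with probability
   [(k - n + 1 + j) / k].  Hence, writing [q = Σ x_i^2], [σ = Σ x_i] and
   [H_j = Σ_{i=2}^{j+1} 1 / (k - n + i)], the function
     [W(x) = (1 - b/2) (q + 2 H_j σ + r_j) + b/2 (σ^2 + 2 k H_j σ + s_j)],
   [j] the number of zeros of [x], is harmonic for [X] at the states off [S]
   other than the origin, for suitable constants [r_j], [s_j] with
   [r_0 = s_0 = 0], so that [W = V] on [S].  The increment of [V] at the first
   return to [S] therefore has the mean of [W] after one step:
     [k Δ_V(x) = (k - n + 1) (W(x - 1) - V(x)) + Σ_l (V(x + e_l) - V(x))],
   which is affine in [Σ x_i] with coefficients depending only on the number
   of ones of [x].  The series defining [Δ_V] does converge to this value: the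
   chain killed on entering [S] contracts [2^j (σ + 2k)^2], which dominates
   [|W - V(x)|], by the factor [(1 + 1/(2k))^2 (1 - 1/k) < 1]. *)

Lemma sum_tuple_cons (V : nmodType) (T : finType) m (F : m.+1.-tuple T -> V) :
  \sum_(t : m.+1.-tuple T) F t =
  \sum_(x : T) \sum_(t : m.-tuple T) F (cons_tuple x t).
Proof.
rewrite pair_big (reindex (fun p : T * m.-tuple T => cons_tuple p.1 p.2)) //=.
exists (fun t : m.+1.-tuple T => (thead t, behead_tuple t)).
  by move=> [x t] _; congr (_, _); apply: val_inj.
by move=> t _; case/tupleP: t => x t; apply: val_inj.
Qed.

Lemma sum_option (V : nmodType) (I : finType) (F : option I -> V) :
  \sum_(o : option I) F o = F None + \sum_(i : I) F (Some i).
Proof.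
rewrite (bigD1 None) //=; congr (_ + _).
rewrite (reindex_omap Some id) /=; last by case.
by apply: eq_bigl => i; rewrite eqxx.
Qed.

Lemma sqr_sum (V : comPzRingType) m (F : 'I_m -> V) :
  (\sum_i F i) ^+ 2 =
  \sum_i F i ^+ 2 + 2 * \sum_(i : 'I_m) \sum_(l : 'I_m | (i < l)%N) F i * F l.
Proof.
have split_row (i : 'I_m) : F i * \sum_l F l =
    F i ^+ 2 + \sum_(l : 'I_m | (i < l)%N) F i * F l + \sum_(l : 'I_m | (l < i)%N) F i * F l.
  rewrite mulr_sumr (bigID (fun l : 'I_m => (i < l)%N)) /= [F i ^+ 2 + _]addrC -addrA.
  congr (_ + _); rewrite (bigD1 i) /= ?ltnn // expr2; congr (_ + _).
  by apply: eq_bigl => l; rewrite -leqNgt ltn_neqAle andbC.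
rewrite expr2 mulr_suml (eq_bigr _ (fun i _ => split_row i)) !big_split /=.
suff -> : \sum_(i : 'I_m) \sum_(l : 'I_m | (l < i)%N) F i * F l =
          \sum_(i : 'I_m) \sum_(l : 'I_m | (i < l)%N) F i * F l.
  by rewrite -addrA -mulr2n mulr_natl.
under eq_bigr do rewrite big_mkcond; rewrite exchange_big /=.
apply: eq_bigr => i _; rewrite [RHS]big_mkcond; apply: eq_bigr => l _.
by case: ifP; rewrite // mulrC.
Qed.

Lemma norm_quad_le (F : realFieldType) (u c q s B : F) :
  `|u| <= B -> `|c| <= B -> 0 <= s -> 0 <= q <= s ^+ 2 ->
  `|q + 2 * u * s + c| <= (1 + B) * (s + 1) ^+ 2.
Proof.
rewrite !ler_norml => /andP[u_lo u_hi] /andP[c_lo c_hi] s0 /andP[q0 qs].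
have B0 : 0 <= B by lra.
have us_le : 0 <= (B - u) * s by apply: mulr_ge0 => //; lra.
have us_ge : 0 <= (B + u) * s by apply: mulr_ge0 => //; lra.
have Bs2 : 0 <= B * s ^+ 2 by rewrite mulr_ge0 ?sqr_ge0.
by apply/andP; split; nra.
Qed.

Section FirstEntry.
Variables (R : realType) (n k : nat).
Hypothesis p_ge0 : forall x y : vec n, 0 <= @pX R n k x y.

Local Notation p x mv := (@pX R n k x (step x mv)).

Definition killed_step (g : vec n -> R) (x : vec n) : R :=
  \sum_(mv : move n) p x mv * (if inS (step x mv) then 0 else g (step x mv)).

Definition entry_increment (f : vec n -> R) (x0 x : vec n) : R :=
  \sum_(mv : move n) p x mv * (if inS (step x mv) then f (step x mv) - f x0 else 0).

Definition next_in (P : pred (vec n)) (x : vec n) : Prop :=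
  forall mv, p x mv != 0 -> ~~ inS (step x mv) -> P (step x mv).

Lemma sum_path_weight f x0 m x :
  \sum_(s : m.+1.-tuple (move n)) @path_weight R n k f x0 x s =
  iter m killed_step (entry_increment f x0) x.
Proof.
elim: m x => [|m IHm] x; rewrite sum_tuple_cons.
  apply: eq_bigr => mv _.
  by rewrite (big_pred1 [tuple]) // => t; apply/esym/eqP; exact: tuple0.
rewrite iterS; apply: eq_bigr => mv _.
rewrite -IHm; case: ifP => xS; last first.
  by rewrite mulr_sumr; apply: eq_bigr => -[[|? ?] //] _ /=; rewrite xS.
by rewrite mulr0; apply: big1 => -[[|? ?] //] _ /=; rewrite xS mulr0.
Qed.

Lemma killed_stepB g1 g2 x :
  killed_step (fun y => g1 y - g2 y) x = killed_step g1 x - killed_step g2 x.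
Proof.
by rewrite -sumrB; apply: eq_bigr => mv _; case: ifP; rewrite ?mulr0 ?subr0 ?mulrBr.
Qed.

Lemma killed_stepZ c g x :
  killed_step (fun y => c * g y) x = c * killed_step g x.
Proof.
rewrite mulr_sumr; apply: eq_bigr => mv _.
by case: ifP; rewrite ?mulr0 // mulrCA.
Qed.

Lemma killed_step_sum (I : Type) (r : seq I) (g : I -> vec n -> R) x :
  killed_step (fun y => \sum_(i <- r) g i y) x = \sum_(i <- r) killed_step (g i) x.
Proof.
rewrite exchange_big; apply: eq_bigr => mv _.
by case: ifP; rewrite ?mulr_sumr // mulr0 big1 // => i; rewrite mulr0.
Qed.

Lemma eq_killed_step g1 g2 x :
  next_in (fun y => g1 y == g2 y) x -> killed_step g1 x = killed_step g2 x.
Proof.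
move=> eqg; apply: eq_bigr => mv _; case: ifP => // /negbT xS.
have [->|p0] := eqVneq (p x mv) 0; first by rewrite !mul0r.
by rewrite (eqP (eqg mv p0 xS)).
Qed.

Lemma killed_step_norm_le g h x :
  next_in (fun y => `|g y| <= h y) x -> `|killed_step g x| <= killed_step h x.
Proof.
move=> gh; apply: le_trans (ler_norm_sum _ _ _) _; apply: ler_sum => mv _.
rewrite normrM ger0_norm //; case: ifP => [_|/negbT xS]; first by rewrite normr0.
have [->|p0] := eqVneq (p x mv) 0; first by rewrite !mul0r.
by rewrite ler_wpM2l // gh.
Qed.

Section Harmonic.
Variables (f G U : vec n -> R) (P : pred (vec n)) (x0 : vec n) (lam : R).
Hypothesis P_next : {in P, forall x, next_in P x}.
Hypothesis G_harmonic :
  {in P, forall x, G x = entry_increment f x0 x + killed_step G x}.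

Local Notation e := (entry_increment f x0).

Lemma sum_iter_entry M x : next_in P x ->
  \sum_(0 <= m < M.+1) iter m killed_step e x =
  e x + killed_step G x - iter M.+1 killed_step G x.
Proof.
elim: M x => [|M IHM] x xP; first by rewrite big_nat1 addrK.
rewrite big_nat_recl //= -killed_step_sum.
rewrite (@eq_killed_step _ (fun y => G y - iter M.+1 killed_step G y)).
  by rewrite killed_stepB addrA.
move=> mv p0 xS; have yP := xP mv p0 xS.
by rewrite IHM ?(G_harmonic yP) //; exact: P_next.
Qed.

Hypotheses (lam_ge0 : 0 <= lam) (lam_lt1 : lam < 1).
Hypothesis G_dom : {in P, forall x, `|G x| <= U x}.
Hypothesis U_super : {in P, forall x, killed_step U x <= lam * U x}.

Lemma iter_killed_step_le M : {in P, forall x, `|iter M killed_step G x| <= lam ^+ M * U x}.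
Proof.
elim: M => [|M IHM] x xP; first by rewrite mul1r G_dom.
apply: le_trans (killed_step_norm_le (h := fun y => lam ^+ M * U y) _) _.
  by move=> mv p0 xS; apply: IHM; exact: P_next.
by rewrite killed_stepZ exprSr -mulrA ler_wpM2l ?exprn_ge0 ?U_super.
Qed.

Hypothesis x0_next : next_in P x0.

Lemma hit_series_cvg :
  (series (@hit_term R n k f x0) @ \oo --> e x0 + killed_step G x0)%classic.
Proof.
set L := _ + _; set c := killed_step U x0.
have err M : `|series (@hit_term R n k f x0) M.+1 - L| <= c * lam ^+ M.
  rewrite /series /= /hit_term.
  under eq_bigr do rewrite sum_path_weight.
  rewrite sum_iter_entry // -/L addrAC subrr add0r normrN mulrC -killed_stepZ.
  apply: killed_step_norm_le => mv p0 xS.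
  exact: iter_killed_step_le (x0_next p0 xS).
have lam1 : `|lam| < 1 by rewrite ger0_norm.
rewrite -cvg_shiftS.
apply: (@squeeze_cvgr _ _ _ _ (fun M => L - c * lam ^+ M) (fun M => L + c * lam ^+ M)).
- by apply: nearW => M /=; rewrite -ler_distl.
- by have := cvgB (cvg_cst L) (cvg_geometric c lam1); rewrite subr0; exact.
- by have := cvgD (cvg_cst L) (cvg_geometric c lam1); rewrite addr0; exact.
Qed.

Lemma DeltaE_first_entry :
  @DeltaE_cvg R n k f x0 /\ @DeltaE R n k f x0 = e x0 + killed_step G x0.
Proof.
split; first exact: cvgP hit_series_cvg.
exact: cvg_lim hit_series_cvg.
Qed.

End Harmonic.
End FirstEntry.

Section Moves.
Variable n : nat.
Implicit Types (x y : vec n) (l : 'I_n.-1).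

Lemma vaddE_at y l : vaddE y l l = (y l).+1.
Proof. by rewrite ffunE eqxx addn1. Qed.

Lemma vaddE_ne y l i : i != l -> vaddE y l i = y i.
Proof. by move=> il; rewrite ffunE (negbTE il) addn0. Qed.

Lemma vaddE_inj y : injective (vaddE y).
Proof.
move=> l l' /(congr1 (fun z : vec n => z l)); rewrite vaddE_at ffunE.
by case: eqP => // _; rewrite addn0 => /esym/n_Sn.
Qed.

Lemma vsub1_neq_vaddE y l : vsub1 y != vaddE y l.
Proof.
by apply/eqP => /(congr1 (fun z : vec n => z l)); rewrite vaddE_at ffunE; lia.
Qed.

Lemma inS_nzeros y : inS y = (nzeros y == 0%N).
Proof.
rewrite /nzeros cards_eq0; apply/forallP/eqP => [yS|y0 i].
  by apply/setP => i; rewrite !inE eqn0Ngt yS.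
by move/setP/(_ i): y0; rewrite !inE lt0n => ->.
Qed.

Lemma inS_vaddE y l : inS y -> inS (vaddE y l).
Proof.
by move/forallP => yS; apply/forallP => i; rewrite ffunE (leq_trans (yS i)) ?leq_addr.
Qed.

Lemma nzeros_vaddE y l : nzeros y = ((y l == 0%N) + nzeros (vaddE y l))%N.
Proof.
rewrite /nzeros (cardsD1 l) inE; congr (_ + _)%N; apply: eq_card => i.
rewrite !inE; have [->|il] := eqVneq i l; first by rewrite vaddE_at.
by rewrite vaddE_ne.
Qed.

Lemma nzeros_le y : (nzeros y <= n.-1)%N.
Proof. by rewrite /nzeros (leq_trans (max_card _)) ?card_ord. Qed.

Lemma nzeros_vzero : nzeros (vzero n) = n.-1.
Proof.
rewrite /nzeros (_ : [set i | _] = [set: 'I_n.-1]) ?cardsT ?card_ord //.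
by apply/setP => i; rewrite !inE ffunE.
Qed.

Lemma nzeros_vaddE_zero y l : y l = 0%N -> nzeros (vaddE y l) = (nzeros y).-1.
Proof. by move=> yl; rewrite [nzeros y](nzeros_vaddE y l) yl. Qed.

Lemma nzeros_vaddE_pos y l : y l != 0%N -> nzeros (vaddE y l) = nzeros y.
Proof. by move=> yl; rewrite [nzeros y](nzeros_vaddE y l) (negbTE yl). Qed.

Lemma vzero_nzeros y : (nzeros y < n.-1)%N -> y != vzero n.
Proof. by apply: contraTneq => ->; rewrite nzeros_vzero ltnn. Qed.

(* The origin is excluded: its transition law differs from that of the other
   states off [S]. *)
Definition outS y : bool := ~~ inS y && (y != vzero n).

End Moves.

Section VectorSums.
Variables (R : realType) (n : nat).
Implicit Types (y : vec n) (l : 'I_n.-1).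

Definition vsum y : R := \sum_i (y i)%:R.
Definition vsumsq y : R := \sum_i (y i)%:R ^+ 2.

Lemma vsum_ge0 y : 0 <= vsum y.
Proof. exact: sumr_ge0. Qed.

Lemma vsumsq_bound y : 0 <= vsumsq y <= vsum y ^+ 2.
Proof.
rewrite sumr_ge0 //= /vsumsq /vsum sqr_sum lerDl mulr_ge0 //.
by do 2!apply: sumr_ge0 => ? _; rewrite mulr_ge0.
Qed.

Lemma Vfun_sums (b : R) y : Vfun b y = (1 - b / 2) * vsumsq y + b / 2 * vsum y ^+ 2.
Proof. by rewrite /Vfun /vsumsq /vsum sqr_sum; field. Qed.

Lemma vsum_vaddE y l : vsum (vaddE y l) = vsum y + 1.
Proof.
rewrite /vsum (bigD1 l) // [in RHS](bigD1 l) //= vaddE_at -addn1 natrD addrAC.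
congr (_ + _ + _).
by apply: eq_bigr => i il; rewrite vaddE_ne.
Qed.

Lemma vsumsq_vaddE y l : vsumsq (vaddE y l) = vsumsq y + 2 * (y l)%:R + 1.
Proof.
rewrite /vsumsq (bigD1 l) // [in RHS](bigD1 l) //= vaddE_at -addn1 natrD.
rewrite (eq_bigr (fun i => (y i)%:R ^+ 2)) => [|i il]; last by rewrite vaddE_ne.
ring.
Qed.

Lemma vsum_vsub1 y : inS y -> vsum (vsub1 y) = vsum y - (n.-1)%:R.
Proof.
move/forallP => yS; rewrite /vsum (eq_bigr (fun i => (y i)%:R - 1)).
  by rewrite sumrB sumr_const card_ord.
by move=> i _; rewrite ffunE natrB.
Qed.

Lemma vsumsq_vsub1 y : inS y -> vsumsq (vsub1 y) = vsumsq y - 2 * vsum y + (n.-1)%:R.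
Proof.
move/forallP => yS; rewrite /vsumsq /vsum (eq_bigr (fun i => (y i)%:R ^+ 2 - 2 * (y i)%:R + 1)).
  by rewrite big_split sumrB -mulr_sumr sumr_const card_ord.
by move=> i _; rewrite ffunE natrB //; ring.
Qed.

Lemma sum_Vfun_vaddE (b : R) y :
  \sum_l (Vfun b (vaddE y l) - Vfun b y) =
  (1 - b / 2) * (2 * vsum y + (n.-1)%:R) + b / 2 * (n.-1)%:R * (2 * vsum y + 1).
Proof.
rewrite (eq_bigr (fun l => (1 - b / 2) * 2 * (y l)%:R
                      + ((1 - b / 2) + b / 2 * (2 * vsum y + 1)))); last first.
  by move=> l _; rewrite !Vfun_sums vsumsq_vaddE vsum_vaddE; ring.
rewrite big_split /= -mulr_sumr sumr_const card_ord -/(vsum y) -mulr_natr; ring.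
Qed.

End VectorSums.

Section Transitions.
Variables (R : realType) (n k : nat).
Implicit Types (x y : vec n) (F : vec n -> R).

Local Notation p x mv := (@pX R n k x (step x mv)).
Local Notation K := (k%:R : R).
Local Notation N := (n%:R : R).

Lemma pX_ge0 x y : (0 < n)%N -> (n <= k)%N -> 0 <= @pX R n k x y.
Proof.
move=> n_gt0 nk; have kn : N <= K by rewrite ler_nat.
have n1 : 1 <= N by rewrite (ler_nat R 1).
have j0 : 0 <= (nzeros x)%:R :> R by [].
rewrite /pX; do ![case: ifP => _ | case: pickP => [? _|_]];
  rewrite ?lexx // divr_ge0 ?mulr_ge0 //; lra.
Qed.

Lemma pX_vsub1_out y : outS y -> @pX R n k y (vsub1 y) = 0.
Proof.
case/andP => yS y0; rewrite /pX -inS_nzeros (negbTE yS) (negbTE y0).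
by case: pickP => // l /eqP vsub1E; have := vsub1_neq_vaddE y l; rewrite vsub1E eqxx.
Qed.

Lemma sum_zeros_const (c : R) y : \sum_(l | y l == 0%N) c = c * (nzeros y)%:R.
Proof. by rewrite sumr_const /nzeros cardsE mulr_natr. Qed.

Lemma sum_nonzeros_const (c : R) y :
  \sum_(l | y l != 0%N) c = c * ((n.-1)%:R - (nzeros y)%:R).
Proof.
rewrite -natrB ?nzeros_le // mulr_natr sumr_const; congr (c *+ _).
apply/eqP; rewrite -(eqn_add2l (nzeros y)) subnKC ?nzeros_le //; apply/eqP.
rewrite -[RHS](card_ord n.-1) -(cardC [pred l | y l == 0%N]) /nzeros cardsE.
by congr (_ + _); apply: eq_card.
Qed.

Lemma sum_nonzeros_val y : \sum_(l | y l != 0%N) (y l)%:R = vsum R y.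
Proof.
rewrite [vsum R y](bigID (fun l => y l == 0%N)) /= [X in _ = X + _]big1 ?add0r //.
by move=> l /eqP ->.
Qed.

Lemma sum_moves_out y F : outS y ->
  \sum_(mv : move n) p y mv * F (step y mv) =
  (K - (N - 1 - (nzeros y)%:R)) / (K * (nzeros y)%:R) * \sum_(l | y l == 0%N) F (vaddE y l)
  + K^-1 * \sum_(l | y l != 0%N) F (vaddE y l).
Proof.
move=> yP; have /andP[yS y0] := yP; have j0 : nzeros y != 0%N by rewrite -inS_nzeros.
rewrite sum_option /= pX_vsub1_out // mul0r add0r !mulr_sumr (bigID (fun l => y l == 0%N)) /=.
congr (_ + _); apply: eq_bigr => l yl; rewrite /pX (negbTE j0) (negbTE y0).
  case: pickP => [l' /eqP/vaddE_inj <-|/(_ l)]; last by rewrite eqxx.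
  by rewrite yl.
case: pickP => [l' /eqP/vaddE_inj <-|/(_ l)]; last by rewrite eqxx.
by rewrite (negbTE yl) div1r.
Qed.

Lemma sum_moves_in y F : inS y ->
  \sum_(mv : move n) p y mv * F (step y mv) =
  (K - (N - 1)) / K * F (vsub1 y) + K^-1 * \sum_l F (vaddE y l).
Proof.
move=> yS; have j0 : nzeros y = 0%N by apply/eqP; rewrite -inS_nzeros.
rewrite sum_option /= mulr_sumr {1}/pX j0 !eqxx; congr (_ + _); apply: eq_bigr => l _.
rewrite /pX j0 eqxx eq_sym (negbTE (vsub1_neq_vaddE y l)).
by case: existsP => [_|[]]; [rewrite div1r | exists l].
Qed.

Lemma next_in_outS y : outS y -> @next_in R n k (@outS n) y.
Proof.
move=> yP [l|] /=; last by rewrite pX_vsub1_out ?eqxx.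
move=> _ zS; rewrite /outS zS; apply/eqP => /(congr1 (fun z : vec n => z l)).
by rewrite vaddE_at ffunE.
Qed.

Lemma next_in_inS x : inS x -> vsub1 x != vzero n -> @next_in R n k (@outS n) x.
Proof.
move=> xS x0 [l|] _ /=; first by rewrite inS_vaddE.
by move=> x1S; rewrite /outS x1S.
Qed.

End Transitions.

Section DeltaV.
Variables (R : realType) (n k : nat).
Hypotheses (n_ge3 : (3 <= n)%N) (n_le_k : (n <= k)%N).
Implicit Types (x y : vec n).

Local Notation K := (k%:R : R).
Local Notation N := (n%:R : R).
Local Notation p x mv := (@pX R n k x (step x mv)).

Lemma K_gt0 : 0 < K.
Proof. by rewrite ltr0n (leq_trans _ n_le_k) // (leq_trans _ n_ge3). Qed.

Lemma shiftK_gt0 i : (0 < i)%N -> 0 < K - N + i%:R.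
Proof.
have : N <= K by rewrite ler_nat.
by rewrite -(ltr_nat R) => ?; lra.
Qed.

Lemma natr_predn : (n.-1)%:R = N - 1 :> R.
Proof. by rewrite -subn1 natrB // (leq_trans _ n_ge3). Qed.

Lemma pX_nonneg x y : 0 <= @pX R n k x y.
Proof. by rewrite pX_ge0 // (leq_trans _ n_ge3). Qed.

Definition lyap y : R := 2 ^+ nzeros y * (vsum R y + 2 * K) ^+ 2.

Definition lyap_rate : R := (1 + (2 * K)^-1) ^+ 2 * (1 - K^-1).

Lemma lyap_ge0 y : 0 <= lyap y.
Proof. by rewrite mulr_ge0 ?sqr_ge0 // exprn_ge0. Qed.

Lemma lyap_rate_ge0 : 0 <= lyap_rate.
Proof.
have K1 : 1 <= K by rewrite (ler_nat R 1) (leq_trans _ n_le_k) // (leq_trans _ n_ge3).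
have : K^-1 <= 1 by rewrite invf_le1 // (lt_le_trans ltr01).
by move=> Ki; apply: mulr_ge0; [exact: sqr_ge0 | lra].
Qed.

Lemma lyap_rate_lt1 : lyap_rate < 1.
Proof.
have K3 : 3 <= K by rewrite (ler_nat R 3) (leq_trans n_ge3).
have -> : lyap_rate = (4 * K ^+ 3 - 3 * K - 1) / (4 * K ^+ 3).
  by rewrite /lyap_rate; field; apply/eqP; lra.
rewrite ltr_pdivrMr ?mul1r; [lra | apply: mulr_gt0; rewrite ?exprn_gt0 //; lra].
Qed.

Lemma lyap_super :
  {in @outS n, forall y, @killed_step R n k lyap y <= lyap_rate * lyap y}.
Proof.
move=> y yP; have /andP[yS _] := yP.
apply: le_trans (_ : \sum_(mv : move n) p y mv * lyap (step y mv) <= _).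
  by apply: ler_sum => mv _; case: ifP => _ //; rewrite mulr0 mulr_ge0 ?pX_nonneg ?lyap_ge0.
rewrite sum_moves_out //.
under eq_bigr => l yl do rewrite /lyap vsum_vaddE (nzeros_vaddE_zero (eqP yl)).
under [X in _ + _ * X]eq_bigr => l yl do rewrite /lyap vsum_vaddE (nzeros_vaddE_pos yl).
rewrite sum_zeros_const sum_nonzeros_const natr_predn /lyap.
have := nzeros_le y; case: (nzeros y) (inS_nzeros y) yS => [-> //|i _ _ iN] /=.
have iN' : i.+2%:R <= N by rewrite ler_nat; move: iN n_ge3; clear; lia.
have K0 := K_gt0; set s := vsum R y; have s0 : 0 <= s := vsum_ge0 R y.
set a := (K - N + i.+2%:R) / K.
rewrite (_ : _ + _ = 2 ^+ i.+1 * ((s + 1 + 2 * K) ^+ 2 * (1 - a / 2))); last first.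
  by rewrite /a [2 ^+ i.+1]exprS; field; rewrite gt_eqF // addrC natr1 pnatr_eq0.
have lin : s + 1 + 2 * K <= (1 + (2 * K)^-1) * (s + 2 * K).
  have : 0 <= (2 * K)^-1 * s by rewrite mulr_ge0 // invr_ge0 mulr_ge0 // ltW.
  have -> : (1 + (2 * K)^-1) * (s + 2 * K) = s + 1 + 2 * K + (2 * K)^-1 * s.
    by field; rewrite gt_eqF.
  lra.
have kn : N <= K by rewrite ler_nat.
have i2 : 2 <= i.+2%:R :> R by rewrite (ler_nat R 2).
have a_le1 : a <= 1 by rewrite /a ler_pdivrMr // mul1r; lra.
have a_ge : 2 * K^-1 <= a by rewrite /a; apply: ler_wpM2r; [rewrite invr_ge0 ltW | lra].
have [a_lo a_hi] : 0 <= 1 - a / 2 /\ 1 - a / 2 <= 1 - K^-1 by split; lra.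
rewrite (_ : lyap_rate * _ =
  2 ^+ i.+1 * (((1 + (2 * K)^-1) * (s + 2 * K)) ^+ 2 * (1 - K^-1))); last first.
  by rewrite /lyap_rate exprMn; ring.
by rewrite ler_wpM2l ?exprn_ge0 // ler_pM ?sqr_ge0 // ler_sqr ?nnegrE //; lra.
Qed.

Variable b : R.

Definition hsum j : R := \sum_(2 <= i < j.+2) 1 / (K - N + i%:R).

Definition rcorr j : R :=
  \sum_(i < j) (K + 2 * K * hsum i.+1 - 2) / (K - N + i.+2%:R).

Definition scorr j : R :=
  \sum_(i < j) K * (2 * K * hsum i.+1 - 1) / (K - N + i.+2%:R).

Definition Vext_form j (q s : R) : R :=
  (1 - b / 2) * (q + 2 * hsum j * s + rcorr j)
  + b / 2 * (s ^+ 2 + 2 * K * hsum j * s + scorr j).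

Definition Vext y : R := Vext_form (nzeros y) (vsumsq R y) (vsum R y).

Lemma Vext_inS y : inS y -> Vext y = Vfun b y.
Proof.
rewrite inS_nzeros /Vext => /eqP ->.
by rewrite Vfun_sums /Vext_form /hsum /rcorr /scorr big_geq // !big_ord0; ring.
Qed.

Lemma Vext_vaddE y l :
  Vext (vaddE y l) =
  Vext_form (nzeros (vaddE y l)) (vsumsq R y + 1) (vsum R y + 1) + (1 - b / 2) * (2 * (y l)%:R).
Proof. by rewrite /Vext vsumsq_vaddE vsum_vaddE /Vext_form; ring. Qed.

Lemma Vext_form_mean i q s :
  (K - N + i.+2%:R) / K * Vext_form i (q + 1) (s + 1)
  + (1 - (K - N + i.+2%:R) / K) * Vext_form i.+1 (q + 1) (s + 1) + (1 - b / 2) * (2 * s) / K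
  = Vext_form i.+1 q s.
Proof.
have hS : hsum i.+1 = hsum i + 1 / (K - N + i.+2%:R) by rewrite /hsum big_nat_recr.
have rS : rcorr i.+1 = rcorr i + (K + 2 * K * hsum i.+1 - 2) / (K - N + i.+2%:R).
  by rewrite /rcorr big_ord_recr.
have sS : scorr i.+1 = scorr i + K * (2 * K * hsum i.+1 - 1) / (K - N + i.+2%:R).
  by rewrite /scorr big_ord_recr.
have K0 := K_gt0; have D0 := shiftK_gt0 (ltn0Sn i.+1).
by rewrite /Vext_form rS sS hS; field; rewrite -natrD add2n (gt_eqF D0) (gt_eqF K0).
Qed.

Lemma pX_sum_out y : outS y -> \sum_(mv : move n) p y mv = 1.
Proof.
move=> yP; have /andP[yS _] := yP.
under eq_bigr do rewrite -[p y _]mulr1.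
rewrite (sum_moves_out k (fun=> 1)) // sum_zeros_const sum_nonzeros_const natr_predn.
have K0 := K_gt0; have j0 : 0 < (nzeros y)%:R :> R by rewrite ltr0n lt0n -inS_nzeros.
by field; rewrite !gt_eqF.
Qed.

Lemma Vext_mean y : outS y -> \sum_(mv : move n) p y mv * Vext (step y mv) = Vext y.
Proof.
move=> yP; have /andP[yS _] := yP; rewrite sum_moves_out //.
under eq_bigr => l yl do
  rewrite Vext_vaddE (nzeros_vaddE_zero (eqP yl)) (eqP yl) mulr0n !mulr0 addr0.
under [X in _ + _ * X]eq_bigr => l yl do rewrite Vext_vaddE (nzeros_vaddE_pos yl).
rewrite sum_zeros_const [\sum_(l | y l != 0%N) _]big_split /= sum_nonzeros_const.
rewrite -!mulr_sumr sum_nonzeros_val.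
rewrite natr_predn /Vext; case: (nzeros y) (inS_nzeros y) yS => [-> //|i _ _] /=.
rewrite -(Vext_form_mean i (vsumsq R y)); have K0 := K_gt0.
by field; rewrite gt_eqF // addrC natr1 pnatr_eq0.
Qed.

Lemma entry_killed_Vext x0 z :
  @entry_increment R n k (Vfun b) x0 z + @killed_step R n k (fun y => Vext y - Vfun b x0) z
  = \sum_(mv : move n) p z mv * (Vext (step z mv) - Vfun b x0).
Proof.
rewrite -big_split; apply: eq_bigr => mv _ /=; rewrite -mulrDr.
by case: ifP => zS; rewrite ?(Vext_inS zS) ?addr0 ?add0r.
Qed.

Lemma Vext_harmonic x0 : {in @outS n, forall y, Vext y - Vfun b x0 =
  @entry_increment R n k (Vfun b) x0 y + @killed_step R n k (fun z => Vext z - Vfun b x0) y}.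
Proof.
move=> y yP; rewrite entry_killed_Vext.
under eq_bigr do rewrite mulrBr.
by rewrite sumrB Vext_mean // -mulr_suml pX_sum_out // mul1r.
Qed.

Definition Delta_slope j : R :=
  (K - N + 1) * (2 + b * (K - 1)) * hsum j - (K - N) * (2 + b * (N - 2)).

Definition Delta_offset j : R :=
  (K - N + 1) * ((1 - b / 2) * (N - 1 - 2 * (N - 1) * hsum j + rcorr j)
                 + b / 2 * ((N - 1) ^+ 2 - 2 * K * (N - 1) * hsum j + scorr j))
  + (N - 1).

Lemma Delta_slope0 : Delta_slope 0 = - (K - N) * (2 + b * (N - 2)).
Proof. by rewrite /Delta_slope /hsum big_geq //; ring. Qed.

Lemma Delta_offset0 :
  Delta_offset 0 = (N - 1) * (K - N + 2 + b * ((K - N + 1) * (N - 2)) / 2).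
Proof. by rewrite /Delta_offset /hsum /rcorr /scorr big_geq // !big_ord0; ring. Qed.

Definition coef_bound : R := \sum_(j < n) (`|hsum j| + `|rcorr j| + `|scorr j|).

Lemma coef_le j : (j < n)%N ->
  [/\ `|hsum j| <= coef_bound, `|rcorr j| <= coef_bound & `|scorr j| <= coef_bound].
Proof.
move=> jn; rewrite /coef_bound (bigD1 (Ordinal jn)) //=.
have : 0 <= \sum_(i < n | i != Ordinal jn) (`|hsum i| + `|rcorr i| + `|scorr i|).
  by apply: sumr_ge0 => i _; rewrite !addr_ge0.
have := normr_ge0 (hsum j); have := normr_ge0 (rcorr j); have := normr_ge0 (scorr j).
by split; lra.
Qed.

Definition Vext_dom_const x0 : R :=
  `|1 - b / 2| * (1 + coef_bound) + `|b / 2| * (1 + K * coef_bound) + `|Vfun b x0|.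

Lemma Vext_dom_const_ge0 x0 : 0 <= Vext_dom_const x0.
Proof.
have B0 : 0 <= coef_bound by apply: sumr_ge0 => j _; rewrite !addr_ge0.
by rewrite !addr_ge0 // !mulr_ge0 // addr_ge0 // mulr_ge0 // ltW // K_gt0.
Qed.

Lemma Vext_dom x0 y : `|Vext y - Vfun b x0| <= Vext_dom_const x0 * lyap y.
Proof.
have jn : (nzeros y < n)%N by have := nzeros_le y; lia.
have [hB rB sB] := coef_le jn; set B := coef_bound in hB rB sB *.
have B0 : 0 <= B := le_trans (normr_ge0 _) hB.
have K1 : 1 <= K by rewrite (ler_nat R 1) (leq_trans _ n_le_k) // (leq_trans _ n_ge3).
set s := vsum R y; have s0 : 0 <= s := vsum_ge0 R y.
have lin := norm_quad_le hB rB s0 (vsumsq_bound R y).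
have quad : `|s ^+ 2 + 2 * (K * hsum (nzeros y)) * s + scorr (nzeros y)|
            <= (1 + K * B) * (s + 1) ^+ 2.
  apply: norm_quad_le => //; last by rewrite sqr_ge0 lexx.
    by rewrite normrM ger0_norm ?ler_wpM2l // ltW // K_gt0.
  by apply: le_trans sB _; rewrite ler_peMl.
have dom : (s + 1) ^+ 2 <= lyap y.
  apply: le_trans (_ : (s + 2 * K) ^+ 2 <= _); first by rewrite ler_sqr ?nnegrE; lra.
  by rewrite /lyap ler_peMl ?sqr_ge0 //; apply: exprn_ege1; rewrite ler1n.
apply: le_trans (_ : Vext_dom_const x0 * (s + 1) ^+ 2 <= _).
  2: by rewrite ler_wpM2l ?Vext_dom_const_ge0.
apply: le_trans (ler_normB _ _) _.
rewrite /Vext_dom_const !mulrDl lerD //; last first.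
  by rewrite ler_peMr //; apply: exprn_ege1; lra.
have -> : Vext y = (1 - b / 2) * (vsumsq R y + 2 * hsum (nzeros y) * s + rcorr (nzeros y))
    + b / 2 * (s ^+ 2 + 2 * (K * hsum (nzeros y)) * s + scorr (nzeros y)).
  by rewrite /Vext /Vext_form mulrA.
apply: le_trans (ler_normD _ _) _.
rewrite (normrM (1 - b / 2)) (normrM (b / 2)) -[`|1 - b / 2| * _ * _]mulrA.
rewrite -[`|b / 2| * _ * _]mulrA.
by apply: lerD; apply: ler_wpM2l.
Qed.

Lemma kDeltaE_Vfun x : inS x -> vsub1 x != vzero n ->
  @DeltaE_cvg R n k (Vfun b) x /\
  K * @DeltaE R n k (Vfun b) x =
    Delta_slope (nzeros (vsub1 x)) * vsum R x + Delta_offset (nzeros (vsub1 x)).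
Proof.
move=> xS x1.
have C0 := Vext_dom_const_ge0 x.
have U_super : {in @outS n, forall y, @killed_step R n k (fun z => Vext_dom_const x * lyap z) y
                              <= lyap_rate * (Vext_dom_const x * lyap y)}.
  by move=> y yP; rewrite killed_stepZ mulrCA ler_wpM2l // lyap_super.
have [cv ->] := DeltaE_first_entry pX_nonneg (@next_in_outS R n k) (Vext_harmonic x)
  lyap_rate_ge0 lyap_rate_lt1 (fun y _ => Vext_dom x y) U_super (next_in_inS xS x1).
split=> //; rewrite entry_killed_Vext (@sum_moves_in R n k x (fun z => Vext z - Vfun b x) xS).
under eq_bigr do rewrite Vext_inS ?inS_vaddE //.
rewrite sum_Vfun_vaddE /Vext vsumsq_vsub1 // vsum_vsub1 // Vfun_sums natr_predn.
have K0 := K_gt0.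
by rewrite /Delta_slope /Delta_offset /Vext_form; field; rewrite gt_eqF.
Qed.

End DeltaV.

Section OnesPrefix.
Variables (n j : nat) (x : vec n).
Hypotheses (x_ones : forall i : 'I_n.-1, (i < j)%N -> x i = 1%N)
           (x_ge2 : forall i : 'I_n.-1, (j <= i)%N -> (2 <= x i)%N)
           (j_le : (j <= n.-1)%N).

Lemma inS_ones_prefix : inS x.
Proof.
apply/forallP => i; case: (ltnP i j) => ij; first by rewrite x_ones.
exact: leq_trans (x_ge2 ij).
Qed.

Lemma nzeros_vsub1_ones_prefix : nzeros (vsub1 x) = j.
Proof.
rewrite /nzeros (_ : [set i | _] = [set i : 'I_n.-1 | (i < j)%N]).
  rewrite -sum1_card (eq_bigl (fun i : 'I_n.-1 => (i < j)%N)) => [|i]; last by rewrite inE.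
  by rewrite -(big_ord_widen n.-1 (fun=> 1%N) j_le) sum1_card card_ord.
apply/setP => i; rewrite !inE ffunE; case: (ltnP i j) => ij; first by rewrite x_ones.
by have := x_ge2 ij; case: (x i) => [|[]].
Qed.

Lemma vsum_ones_prefix (R : realType) :
  vsum R x = j%:R + \sum_(i < n.-1 | (j <= i)%N) (x i)%:R.
Proof.
rewrite /vsum (bigID (fun i : 'I_n.-1 => (i < j)%N)) /=; congr (_ + _).
  rewrite (eq_bigr (fun=> 1)) => [|i /x_ones ->] //.
  by rewrite -(big_ord_widen n.-1 (fun=> 1 : R) j_le) sumr_const card_ord.
by apply: eq_bigl => i; rewrite -leqNgt.
Qed.

End OnesPrefix.

Theorem proposition7p4 (R : realType) (n k : nat) (b : R) :
  (3 <= n)%N -> (n <= k)%N ->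
  (forall x : vec n, inS x -> ~~ inSstar x ->
     @DeltaE_cvg R n k (Vfun b) x /\
     k%:R * @DeltaE R n k (Vfun b) x =
       - (k%:R - n%:R) * (2 + b * (n%:R - 2)) * \sum_(i < n.-1) (x i)%:R
       + (n%:R - 1) * (k%:R - n%:R + 2
                       + b * ((k%:R - n%:R + 1) * (n%:R - 2)) / 2)) /\
  (exists delta : nat -> R,
     forall j : nat, (1 <= j <= n - 2)%N ->
     forall x : vec n,
       (forall i : 'I_n.-1, (i < j)%N -> x i = 1%N) ->
       (forall i : 'I_n.-1, (j <= i)%N -> (2 <= x i)%N) ->
       @DeltaE_cvg R n k (Vfun b) x /\
       k%:R * @DeltaE R n k (Vfun b) x =
         ((k%:R - n%:R + 1) * (2 + b * (k%:R - 1))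
            * (\sum_(2 <= i < j.+2) 1 / (k%:R - n%:R + i%:R))
          - (k%:R - n%:R) * (2 + b * (n%:R - 2)))
           * (\sum_(i < n.-1 | (j <= i)%N) (x i)%:R)
         + delta j).
Proof.
move=> n_ge3 n_le_k; split=> [x xS xS'|].
  have x1S : inS (vsub1 x) by move: xS'; rewrite /inSstar xS negbK.
  have j0 : nzeros (vsub1 x) = 0%N by apply/eqP; rewrite -inS_nzeros.
  have x1 : vsub1 x != vzero n by apply: vzero_nzeros; rewrite j0; lia.
  have [cv ->] := kDeltaE_Vfun n_ge3 n_le_k b xS x1.
  by rewrite j0 Delta_slope0 Delta_offset0.
exists (fun j => Delta_slope n k b j * j%:R + Delta_offset n k b j).
move=> j /andP[j_ge1 j_le] x x_ones x_ge2.
have j_le' : (j <= n.-1)%N by lia.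
have j_nz := nzeros_vsub1_ones_prefix x_ones x_ge2 j_le'.
have x1 : vsub1 x != vzero n by apply: vzero_nzeros; rewrite j_nz; lia.
have [cv ->] := kDeltaE_Vfun n_ge3 n_le_k b (inS_ones_prefix x_ones x_ge2) x1.
by split=> //; rewrite j_nz (vsum_ones_prefix x_ones j_le' R) /Delta_slope /hsum; ring.
Qed.
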